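(* Let $\lambda\in\Lambda$ and let $D$ be a ball contained in $K(Q_\lambda,B)$. Then (1) all points of $D$ have the same itinerary for $Q_\lambda$; (2) if this common itinerary is not pre-periodic under the one-sided shift, then $D$ is a wandering disc for $Q_\lambda$ which is not attracted to an attracting periodic orbit.
   Context: Let $p$ be a prime, $\mathbb C_p$ with $p$-adic absolute value, $|p|=1/p$. $\Lambda=\{\lambda\in\mathbb C_p:|\lambda-1|<1\}$, $P_\lambda(z)=\frac{\lambda}{p}z^p+\left(1-\frac{\lambda}{p}\right)z^{p+1}$, $\rho=p^{-1/(p-1)}$. Fix $\hat r\in|\mathbb C_p^*|$, $\hat r>1$, $B=\{z:|z|\le\hat r\}$; $\mathcal H(B)$ is the ring of power series $\sum a_iz^i$ convergent on $B$ with norm $\|f\|_B=\sup_i|a_i|\hat r^{\,i}$. Fix $Q\in\mathcal H(B)$ with $\|Q\|_B<\rho$, $Q^*_\lambda=P_\lambda+Q$, and let $h(\lambda)$ be the unique fixed point of $Q^*_\lambda$ in $\{z:|z-1|\le|Q(1)|/p\}$. Define $Q_\lambda(z)=P_\lambda(z+h(\lambda)-1)+Q(z+h(\lambda)-1)+1-h(\lambda)$ for $z\in B$, and $K(Q_\lambda,B)=\{z\in B:Q_\lambda^n(z)\in B\ \forall n\ge0\}$. Let $B_0=\{z:|z|<1\}$, $B_1=\{z:|z-1|<1\}$; one has $K(Q_\lambda,B)\subset B_0\sqcup B_1$. The itinerary of $z\in K(Q_\lambda,B)$ is the sequence $\theta_0\theta_1\theta_2\ldots\in\{0,1\}^{\mathbb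 N\cup\{0\}}$ with $Q_\lambda^n(z)\in B_{\theta_n}$ for all $n\ge0$. $D$ is a wandering disc if $Q_\lambda^n(D)\cap Q_\lambda^m(D)\neq\emptyset$ only when $n=m$; it is not attracted to an attracting periodic orbit if no point of $D$ lies in an open ball contained in the basin of attraction of an attracting periodic point $z_0$ (of period $k$, with $|(Q_\lambda^k)'(z_0)|<1$). *)

From HB Require Import structures.
From mathcomp Require Import all_boot all_order all_algebra.
From mathcomp Require Import all_classical all_reals all_analysis.
Set Implicit Arguments. Unset Strict Implicit. Unset Printing Implicit Defensive.
Import Order.TTheory GRing.Theory Num.Theory.
Local Open Scope ring_scope.
Local Open Scope classical_set_scope.

Definition rho (R : realType) (p : nat) : R := (p%:R) `^ (- (p%:R - 1)^-1).

Section Cp.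
Variables (R : realType) (K : fieldType) (absv : K -> R).

Definition cvgK (u : nat -> K) (l : K) : Prop :=
  forall e : R, 0 < e -> exists N : nat, forall n, (N <= n)%N -> absv (u n - l) < e.

Definition cauchyK (u : nat -> K) : Prop :=
  forall e : R, 0 < e -> exists N : nat, forall m n, (N <= m)%N -> (N <= n)%N ->
    absv (u m - u n) < e.

(* (K, absv) is (isomorphic to) C_p: a complete non-archimedean absolutely valued
   field (K is required algebraically closed in the theorem) with |p| = 1/p, in which
   the algebraic numbers (roots of nonzero rational polynomials) are dense. *)
Definition is_Cp (p : nat) : Prop :=
  [/\ prime p,
      absv 0 = 0,
      (forall x, x != 0 -> 0 < absv x),
      (forall x y, absv (x * y) = absv x * absv y) &
      (forall x y, absv (x + y) <= Num.max (absv x) (absv y))] /\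
  [/\ absv (p%:R) = (p%:R)^-1,
      (forall u, cauchyK u -> exists l, cvgK u l) &
      (forall x (e : R), 0 < e -> exists y : K,
          (exists q : {poly rat}, q != 0 /\ root (map_poly (@ratr K) q) y) /\
          absv (x - y) < e)].

Definition Pl (p : nat) (l z : K) : K :=
  l / p%:R * z ^+ p + (1 - l / p%:R) * z ^+ p.+1.

Definition ps_sum (a : nat -> K) (z : K) (n : nat) : K := \sum_(i < n) a i * z ^+ i.

Definition is_series_fun (rhat : R) (a : nat -> K) (Qf : K -> K) : Prop :=
  forall z, absv z <= rhat -> cvgK (ps_sum a z) (Qf z).

Definition Qlam (p : nat) (Qf : K -> K) (l h : K) (z : K) : K :=
  Pl p l (z + h - 1) + Qf (z + h - 1) + 1 - h.

Definition filledK (f : K -> K) (rhat : R) (z : K) : Prop :=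
  forall n : nat, absv (iter n f z) <= rhat.

(* th is the itinerary of z (false = 0 : B_0, true = 1 : B_1) *)
Definition itinerary_of (f : K -> K) (z : K) (th : nat -> bool) : Prop :=
  forall n : nat, if th n then absv (iter n f z - 1) < 1 else absv (iter n f z) < 1.

Definition preperiodic (th : nat -> bool) : Prop :=
  exists m k : nat, (0 < k)%N /\ forall n, (m <= n)%N -> th (n + k)%N = th n.

Definition cp_ball (D : set K) : Prop :=
  exists (c : K) (r : R), 0 < r /\
    (D = [set z | absv (z - c) < r] \/ D = [set z | absv (z - c) <= r]).

Definition wandering (f : K -> K) (D : set K) : Prop :=
  forall n m : nat, (exists w, (iter n f @` D) w /\ (iter m f @` D) w) -> n = m.

Definition has_derivK (f : K -> K) (z0 L : K) : Prop :=
  forall e : R, 0 < e -> exists d : R, 0 < d /\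
    forall z, 0 < absv (z - z0) < d -> absv ((f z - f z0) / (z - z0) - L) < e.

Definition attracting_periodic (f : K -> K) (rhat : R) (z0 : K) (k : nat) : Prop :=
  [/\ (0 < k)%N, filledK f rhat z0, iter k f z0 = z0 &
      exists L, has_derivK (iter k f) z0 L /\ absv L < 1].

Definition basin (f : K -> K) (rhat : R) (z0 : K) (k : nat) (w : K) : Prop :=
  filledK f rhat w /\ cvgK (fun n => iter (n * k) f w) z0.

Definition not_attracted (f : K -> K) (rhat : R) (D : set K) : Prop :=
  ~ exists (z0 : K) (k : nat), attracting_periodic f rhat z0 k /\
      exists (z c : K) (r : R), [/\ D z, 0 < r, absv (z - c) < r &
        forall w, absv (w - c) < r -> basin f rhat z0 k w].

End Cp.

From HB Require Import structures.
From mathcomp Require Import all_boot all_order all_algebra.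
From mathcomp Require Import all_classical all_reals all_analysis.
From mathcomp Require Import ring zify.
Set Implicit Arguments. Unset Strict Implicit. Unset Printing Implicit Defensive.
Import Order.TTheory GRing.Theory Num.Theory.
Local Open Scope ring_scope.
Local Open Scope classical_set_scope.

(* Outside B_0 and B_1 one has |Q_lambda z| >= p |z|, so every point of
   K(Q_lambda, B) lies in B_0 or B_1.  On the closed unit disc Q_lambda is a
   uniform limit of polynomials that are p-Lipschitz there, hence along a segment
   x + t (y - x), |t| <= 1, inside K(Q_lambda, B) every iterate is uniformly
   approximated by a polynomial in t.  If |Q^n x - Q^n y| >= 1, such a polynomial
   has a non-constant coefficient of norm >= 1, so by the Newton polygon it takes,
   for some |t| <= 1, a value far from B_0 and B_1: contradiction.  Thus the
   iterates of a ball stay within distance < 1 of each other and share one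
   itinerary.  If Q^n(D) meets Q^m(D) with n <> m, or if D lies in the basin of
   an attracting cycle (then the p^j-Lipschitz bound on iterates makes the cycle
   shadow the orbit), that itinerary is pre-periodic. *)

Lemma exists_geometric_le (R : realType) (c r e : R) : 1 < r -> 0 < e ->
  exists N : nat, c * r^-1 ^+ N <= e.
Proof.
move=> r1 e0; have r0 : 0 < r := lt_trans ltr01 r1.
have r1' : `|r^-1| < 1 by rewrite ger0_norm ?invr_ge0 ?invf_lt1 // ltW.
have [N _ HN] := @cvgr0_norm_le _ _ _ _ _ _ (cvg_geometric c r1') _ e0.
by exists N; apply: le_trans (ler_norm _) (HN N (leqnn N)).
Qed.

Definition ultrametric_absv (R : realType) (K : fieldType) (absv : K -> R) : Prop :=
  [/\ absv 0 = 0, forall x, x != 0 -> 0 < absv x,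
      forall x y, absv (x * y) = absv x * absv y &
      forall x y, absv (x + y) <= Num.max (absv x) (absv y)].

Section Ultrametric.
Variables (R : realType) (K : fieldType) (absv : K -> R).
Hypothesis Hv : ultrametric_absv absv.

Lemma absv0 : absv 0 = 0. Proof. by case: Hv. Qed.
Lemma absv_gt0 x : x != 0 -> 0 < absv x. Proof. by case: Hv => _ H _ _; apply: H. Qed.
Lemma absvM x y : absv (x * y) = absv x * absv y. Proof. by case: Hv. Qed.
Lemma absvD_max x y : absv (x + y) <= Num.max (absv x) (absv y). Proof. by case: Hv. Qed.

Lemma absv_ge0 x : 0 <= absv x.
Proof. by have [->|/absv_gt0/ltW//] := eqVneq x 0; rewrite absv0. Qed.

Lemma absv1 : absv 1 = 1.
Proof.
have a1_gt0 : 0 < absv 1 by apply: absv_gt0; exact: oner_neq0.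
by apply: (mulfI (lt0r_neq0 a1_gt0)); rewrite -absvM !mulr1.
Qed.

Lemma absvX x n : absv (x ^+ n) = absv x ^+ n.
Proof. by elim: n => [|n IH]; rewrite ?absv1 // !exprS absvM IH. Qed.

Lemma absvN x : absv (- x) = absv x.
Proof.
have aN1_sq : absv (-1) ^+ 2 = 1 by rewrite -absvX sqrrN expr1n absv1.
have aN1 : absv (-1) = 1 by apply/eqP; rewrite -(pexpr_eq1 (n := 2) _ (absv_ge0 _)) ?aN1_sq.
by rewrite -mulN1r absvM aN1 mul1r.
Qed.

Lemma absvV x : absv x^-1 = (absv x)^-1.
Proof.
have [->|x0] := eqVneq x 0; first by rewrite invr0 absv0 invr0.
apply: (mulfI (lt0r_neq0 (absv_gt0 x0))).
by rewrite -absvM !mulfV ?absv1 // lt0r_neq0 // absv_gt0.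
Qed.

Lemma absv_distrC x y : absv (x - y) = absv (y - x).
Proof. by rewrite -absvN opprB. Qed.

Lemma absvD_le x y (B : R) : absv x <= B -> absv y <= B -> absv (x + y) <= B.
Proof. by move=> hx hy; apply: le_trans (absvD_max x y) _; rewrite ge_max hx hy. Qed.

Lemma absvD_lt x y (B : R) : absv x < B -> absv y < B -> absv (x + y) < B.
Proof. by move=> hx hy; apply: le_lt_trans (absvD_max x y) _; rewrite gt_max hx hy. Qed.

Lemma absvB_le x y (B : R) : absv x <= B -> absv y <= B -> absv (x - y) <= B.
Proof. by move=> hx hy; apply: absvD_le; rewrite ?absvN. Qed.

Lemma absvB_lt x y (B : R) : absv x < B -> absv y < B -> absv (x - y) < B.
Proof. by move=> hx hy; apply: absvD_lt; rewrite ?absvN. Qed.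

Lemma absvD_eqr x y : absv x < absv y -> absv (x + y) = absv y.
Proof.
move=> lt_xy; apply/eqP; rewrite eq_le (absvD_le (ltW lt_xy) (lexx _)) /=.
have := absvD_max (x + y) (- x); rewrite absvN addrC addKr le_max.
by case/orP=> [//|le_yx]; have := lt_le_trans lt_xy le_yx; rewrite ltxx.
Qed.

Lemma absv_sum_le (I : Type) (r : seq I) (P : pred I) (F : I -> K) (B : R) : 0 <= B ->
  (forall i, P i -> absv (F i) <= B) -> absv (\sum_(i <- r | P i) F i) <= B.
Proof.
move=> B0 hF; apply: (big_ind (fun x => absv x <= B)) => //; first by rewrite absv0.
by move=> x y hx hy; exact: absvD_le hx hy.
Qed.

Lemma absv_sum_lt (I : Type) (r : seq I) (P : pred I) (F : I -> K) (B : R) : 0 < B ->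
  (forall i, P i -> absv (F i) < B) -> absv (\sum_(i <- r | P i) F i) < B.
Proof.
move=> B0 hF; apply: (big_ind (fun x => absv x < B)) => //; first by rewrite absv0.
by move=> x y hx hy; exact: absvD_lt hx hy.
Qed.

Lemma absvXB_le u v k : absv u <= 1 -> absv v <= 1 -> absv (u ^+ k - v ^+ k) <= absv (u - v).
Proof.
move=> hu hv; rewrite subrXX absvM -[leRHS]mulr1 ler_wpM2l ?absv_ge0 //.
apply: absv_sum_le => // i _; rewrite absvM !absvX.
by rewrite mulr_ile1 ?exprn_ile1 ?exprn_ge0 ?absv_ge0.
Qed.

Lemma ultra_ball_recenter x y z (r : R) : absv (x - y) < r ->
  (absv (x - z) < r) = (absv (y - z) < r).
Proof.
move=> hxy; apply/idP/idP => H.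
  by rewrite (_ : y - z = - (x - y) + (x - z)); [apply: absvD_lt; rewrite ?absvN | ring].
by rewrite (_ : x - z = (x - y) + (y - z)); [exact: absvD_lt | ring].
Qed.

Lemma cvgK_absv_le (u : nat -> K) l b (B : R) N : cvgK absv u l ->
  (forall m, (N <= m)%N -> absv (u m - b) <= B) -> absv (l - b) <= B.
Proof.
move=> cu hu; apply/ler_addgt0Pr => e e0.
have [M HM] := cu e e0; pose m := maxn M N.
rewrite (_ : l - b = (l - u m) + (u m - b)); last by ring.
apply: absvD_le; last by apply: le_trans (hu m (leq_maxr _ _)) _; rewrite lerDl ltW.
rewrite absv_distrC; apply: ltW; apply: lt_le_trans (HM m (leq_maxl _ _)) _.
by rewrite lerDr (le_trans (absv_ge0 _) (hu N (leqnn N))).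
Qed.

Definition inB01 (z : K) : Prop := absv z < 1 \/ absv (z - 1) < 1.

Lemma inB01_le1 z : inB01 z -> absv z <= 1.
Proof.
by case=> [/ltW//|z1]; rewrite -(subrK 1 z); apply: absvD_le; rewrite ?absv1 // ltW.
Qed.

Lemma absv_gt1_notinB01 z : 1 < absv z -> ~ inB01 z.
Proof.
move=> z1; have z_1 : absv (z - 1) = absv z by rewrite addrC absvD_eqr ?absvN ?absv1.
by rewrite /inB01 z_1 ltNge (ltW z1) => -[].
Qed.

Lemma inB01_recenter v w : absv (v - w) < 1 -> inB01 v -> inB01 w.
Proof.
move=> hvw [hv|hv]; [left|right]; last by rewrite -(ultra_ball_recenter _ hvw).
by rewrite -[w]subr0 -(ultra_ball_recenter _ hvw) subr0.
Qed.

Lemma itinerary_ofE (f : K -> K) z th n : itinerary_of absv f z th ->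
  th n = (absv (iter n f z - 1) < 1).
Proof.
move=> /(_ n); case: (th n) => // lt1.
by rewrite absvD_eqr ?absvN ?absv1 ?ltxx.
Qed.

Lemma not_preperiodic_wandering (f : K -> K) (D : set K) th :
  (forall z, D z -> itinerary_of absv f z th) -> ~ preperiodic th -> wandering f D.
Proof.
move=> Hit np n m [w [[z1 Dz1 e1] [z2 Dz2 e2]]].
have {e1 e2} shift j : th (j + n)%N = th (j + m)%N.
  by rewrite (itinerary_ofE _ (Hit z1 Dz1)) (itinerary_ofE _ (Hit z2 Dz2)) !iterD e1 e2.
wlog lt_nm : n m shift / (n < m)%N.
  move=> gen; case: (ltngtP n m) => [lt|lt|//]; first exact: gen.
  by apply/esym/(gen m n) => // j; rewrite shift.
exfalso; apply: np; exists n, (m - n)%N; split; first by rewrite subn_gt0.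
move=> i le_ni; have := shift (i - n)%N; rewrite subnK // => ->; congr th; lia.
Qed.

Lemma cp_ball_segment (D : set K) : cp_ball absv D ->
  exists2 c, D c & forall z t, D z -> absv t <= 1 -> D (c + t * (z - c)).
Proof.
case=> c [r [r0 HD]]; exists c; first by case: HD => ->; rewrite /= subrr absv0 // ltW.
move=> z t Dz ht; have le_zc : absv (c + t * (z - c) - c) <= absv (z - c).
  by rewrite addrAC subrr add0r absvM ler_piMl ?absv_ge0.
by case: HD Dz => -> /= Dz; [exact: le_lt_trans le_zc Dz | exact: le_trans le_zc Dz].
Qed.

Lemma poly_lipschitz (P : {poly K}) (L : R) z w : (forall i, absv P`_i <= L) ->
  absv z <= 1 -> absv w <= 1 -> absv (P.[z] - P.[w]) <= L * absv (z - w).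
Proof.
move=> hP hz hw; have L0 : 0 <= L := le_trans (absv_ge0 _) (hP 0%N).
rewrite !horner_coef -sumrB; apply: absv_sum_le => [|i _]; first by rewrite mulr_ge0 ?absv_ge0.
by rewrite -mulrBr absvM ler_pM ?absv_ge0 ?absvXB_le.
Qed.

Lemma exists_coef_ge (P : {poly K}) (B : R) : 0 < B -> B <= absv (P.[1] - P.[0]) ->
  exists2 k, (0 < k)%N & B <= absv P`_k.
Proof.
move=> B0 hB; case: (pselect (exists2 k, (0 < k)%N & B <= absv P`_k)) => // none.
pose Q := P - (P`_0)%:P.
have Qcoef i : absv Q`_i < B.
  rewrite coefB coefC; case: i => [|i] /=; first by rewrite subrr absv0.
  by rewrite subr0 ltNge; apply/negP => Hi; apply: none; exists i.+1.
have : absv Q.[1] < B by rewrite horner_coef; apply: absv_sum_lt => // i _; rewrite expr1n mulr1.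
by rewrite /Q hornerD hornerN hornerC -horner_coef0 ltNge hB.
Qed.

End Ultrametric.

Section ClosedUltrametric.
Variables (R : realType) (K : closedFieldType) (absv : K -> R).
Hypothesis Hv : ultrametric_absv absv.

Lemma prod_XsubC_coef_lt (s : seq K) : (forall r, r \in s -> 1 < absv r) ->
  forall k, (0 < k)%N ->
  absv (\prod_(z <- s) ('X - z%:P))`_k < absv (\prod_(z <- s) ('X - z%:P))`_0.
Proof.
elim: s => [|z s IH] hs k k0; first by rewrite big_nil !coefC (gtn_eqF k0) (absv0 Hv) (absv1 Hv).
set G := \prod_(z <- s) ('X - z%:P).
have {}IH := IH (fun r rs => hs r (mem_behead (s := z :: s) rs)).
have hz : 1 < absv z by apply: hs; rewrite mem_head.
have G0 : 0 < absv G`_0 by apply: le_lt_trans (IH 1%N isT); exact: (absv_ge0 Hv).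
have zG : absv G`_0 < absv z * absv G`_0 by rewrite ltr_pMl.
rewrite big_cons -/G mulrBl !coefB !coefXM !coefCM /= (gtn_eqF k0) sub0r (absvN Hv) (absvM Hv).
apply: (absvB_lt Hv) => //; last by rewrite (absvM Hv) ltr_pM2l ?(lt_trans ltr01 hz) // IH.
by case: k k0 => [|[|k]] // _; apply: lt_trans zG; exact: IH.
Qed.

(* Otherwise all roots lie outside the unit disc, and the constant coefficient
   of the monic factorisation strictly dominates all the others. *)
Lemma root_in_unit_disc (P : {poly K}) k : (0 < k)%N -> P`_k != 0 ->
  absv P`_0 <= absv P`_k -> exists2 t, absv t <= 1 & root P t.
Proof.
move=> k0 Pk0 hP; case: (pselect (exists2 t, absv t <= 1 & root P t)) => // none.
have P0 : P != 0 by apply: contraNneq Pk0 => ->; rewrite coef0.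
have [s Hs] := closed_field_poly_normal P.
have lc0 : lead_coef P != 0 by rewrite lead_coef_eq0.
have roots_out r : r \in s -> 1 < absv r.
  move=> rs; rewrite ltNge; apply/negP => hr; apply: none; exists r => //.
  by rewrite Hs rootZ // root_prod_XsubC.
have := prod_XsubC_coef_lt roots_out k0.
by rewrite -(ltr_pM2l (absv_gt0 Hv lc0)) -!(absvM Hv) -!coefZ -Hs ltNge hP.
Qed.

(* A root [w] of X^2 - X + 1 works: [w ^+ 3 = -1] and [w - 1 = w ^+ 2]. *)
Lemma exists_unit_off_one : exists w, absv w = 1 /\ absv (w - 1) = 1.
Proof.
have [w hw] := @solve_monicpoly K 2 (fun i => if i == 0%N then -1 else 1) isT.
rewrite !big_ord_recr big_ord0 /= add0r expr0 expr1 mulr1 mul1r in hw.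
have {}hw : w * w = w - 1 by rewrite -expr2 hw addrC.
have w3 : w ^+ 3 = -1 by rewrite !exprS expr0 mulr1 hw mulrBr hw; ring.
have w1 : absv w = 1.
  apply/eqP; rewrite -(pexpr_eq1 (n := 3) _ (absv_ge0 Hv _)) //.
  by rewrite -(absvX Hv) w3 (absvN Hv) (absv1 Hv).
by exists w; rewrite -hw (absvM Hv) w1 mulr1.
Qed.

Lemma exists_notinB01_near (z b : K) : absv z <= 1 -> 1 <= absv b ->
  exists w, absv (z - w) <= absv b /\ ~ inB01 absv w.
Proof.
move=> z1; rewrite le_eqVlt => /orP[/eqP b1|b1].
  have [w [w1 w_1]] := exists_unit_off_one.
  by exists w; rewrite -b1 (absvB_le Hv) ?w1 // /inB01 w1 w_1 ltxx; split=> // -[].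
have zb : absv (z + b) = absv b by rewrite (absvD_eqr Hv) // (le_lt_trans z1 b1).
exists (z + b); split; first by rewrite opprD addNKr (absvN Hv).
by apply: (absv_gt1_notinB01 Hv); rewrite zb.
Qed.

End ClosedUltrametric.

Section SegmentDynamics.
Variables (R : realType) (K : closedFieldType) (absv : K -> R) (f : K -> K) (rhat L : R).
Hypothesis Hv : ultrametric_absv absv.
Hypothesis filled_inB01 : forall z, filledK absv f rhat z -> inB01 absv z.
Hypothesis L_ge1 : 1 <= L.
Hypothesis f_poly_approx : forall e : R, 0 < e -> exists F : {poly K},
  (forall z, absv z <= 1 -> absv (f z - F.[z]) <= e) /\
  (forall z w, absv z <= 1 -> absv w <= 1 -> absv (F.[z] - F.[w]) <= L * absv (z - w)).

Local Notation filled := (filledK absv f rhat).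

Lemma filledK_iter n z : filled z -> filled (iter n f z).
Proof. by move=> hz m; rewrite -iterD; exact: hz. Qed.

Lemma filledK_le1 z : filled z -> absv z <= 1.
Proof. by move/filled_inB01/(inB01_le1 Hv). Qed.

Lemma poly_approx_lipschitz z w : absv z <= 1 -> absv w <= 1 ->
  absv (f z - f w) <= L * absv (z - w).
Proof.
move=> hz hw; apply/ler_addgt0Pr => e e0.
have [F [HF LF]] := f_poly_approx e0.
rewrite (_ : f z - f w = (f z - F.[z]) + (F.[z] - F.[w]) - (f w - F.[w])); last by ring.
have Le0 : 0 <= L * absv (z - w) by rewrite mulr_ge0 ?(absv_ge0 Hv) // (le_trans ler01).
apply: (absvB_le Hv); first apply: (absvD_le Hv).
- by apply: le_trans (HF z hz) _; rewrite lerDr.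
- by apply: le_trans (LF z w hz hw) _; rewrite lerDl ltW.
- by apply: le_trans (HF w hw) _; rewrite lerDr.
Qed.

Lemma iter_filled_lipschitz j z w : filled z -> filled w ->
  absv (iter j f z - iter j f w) <= L ^+ j * absv (z - w).
Proof.
move=> hz hw; elim: j => [|j IH]; first by rewrite expr0 mul1r.
rewrite iterS exprS -mulrA; apply: le_trans (poly_approx_lipschitz _ _) _.
- exact/filledK_le1/filledK_iter.
- exact/filledK_le1/filledK_iter.
by rewrite ler_wpM2l // (le_trans ler01).
Qed.

Lemma iter_segment_approx x y n :
  (forall t, absv t <= 1 -> filled (x + t * (y - x))) ->
  forall e, 0 < e -> e < 1 -> exists P : {poly K}, forall t, absv t <= 1 ->
    absv (P.[t] - iter n f (x + t * (y - x))) <= e.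
Proof.
move=> hseg; elim: n => [|n IH] e e0 e1.
  by exists (x%:P + 'X * (y - x)%:P) => t _; rewrite !hornerE subrr (absv0 Hv) ltW.
have L0 : 0 < L by apply: lt_le_trans L_ge1.
have eL0 : 0 < e / L by rewrite divr_gt0.
have eL1 : e / L < 1 by apply: le_lt_trans e1; rewrite ler_pdivrMr // ler_peMr // ltW.
have [P HP] := IH _ eL0 eL1; have [F [HF LF]] := f_poly_approx e0.
exists (F \Po P) => t ht; rewrite horner_comp iterS.
set v := iter n f _; have v1 : absv v <= 1 by exact/filledK_le1/filledK_iter/hseg.
have Pt1 : absv P.[t] <= 1.
  by rewrite -(subrK v P.[t]) (absvD_le Hv) // (le_trans (HP t ht)) ?ltW.
rewrite (_ : F.[P.[t]] - f v = (F.[P.[t]] - F.[v]) - (f v - F.[v])); last by ring.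
apply: (absvB_le Hv); last exact: HF.
apply: le_trans (LF _ _ Pt1 v1) _.
by rewrite -ler_pdivlMl // mulrC; exact: HP.
Qed.

(* Otherwise an approximating polynomial has a coefficient of absolute value at
   least 1, so by [root_in_unit_disc] it attains a value far from both [B_0]
   and [B_1]; the corresponding point of the segment escapes. *)
Lemma iter_segment_close x y n :
  (forall t, absv t <= 1 -> filled (x + t * (y - x))) ->
  absv (iter n f x - iter n f y) < 1.
Proof.
move=> hseg; rewrite ltNge; apply/negP => far_xy.
have half0 : (0 : R) < 2^-1 by rewrite invr_gt0 ltr0n.
have half1 : (2^-1 : R) < 1 by rewrite invf_lt1 ?ltr1n ?ltr0n.
have [P HP] := iter_segment_approx n hseg half0 half1.
have Px : absv (P.[0] - iter n f x) < 1.
  by apply: le_lt_trans half1; have := HP 0; rewrite mul0r addr0 (absv0 Hv) ler01; apply.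
have Py : absv (P.[1] - iter n f y) < 1.
  by apply: le_lt_trans half1; have := HP 1; rewrite mul1r subrKC (absv1 Hv) lexx; apply.
have P01 : 1 <= absv (P.[1] - P.[0]).
  rewrite leNgt; apply/negP => near01; move: far_xy; rewrite leNgt => /negP; apply.
  rewrite (_ : _ - _ = - (P.[0] - iter n f x) - (P.[1] - P.[0]) + (P.[1] - iter n f y)).
    by apply: (absvD_lt Hv) Py; apply: (absvB_lt Hv) near01; rewrite (absvN Hv).
  by ring.
have [k k0 Pk] := exists_coef_ge Hv ltr01 P01.
have P0 : absv P`_0 <= 1.
  have x1 : absv (iter n f x) <= 1.
    by apply/filledK_le1/filledK_iter; have := hseg 0; rewrite mul0r addr0 (absv0 Hv) ler01; apply.
  by rewrite -horner_coef0 -(subrK (iter n f x) P.[0]); apply: (absvD_le Hv) x1; exact: ltW.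
have [w [Pw w_far]] := exists_notinB01_near Hv P0 Pk.
have k_ne0 : k != 0%N by rewrite -lt0n.
have [t t1 /rootP] : exists2 t, absv t <= 1 & root (P - w%:P) t.
  apply: (root_in_unit_disc Hv k0); rewrite !coefB !coefC (negbTE k_ne0) subr0 //.
  by apply: contraTneq Pk => ->; rewrite (absv0 Hv) -ltNge.
rewrite hornerD hornerN hornerC => /eqP; rewrite subr_eq0 => /eqP Pt.
apply/w_far/(inB01_recenter Hv (v := iter n f (x + t * (y - x)))).
  by rewrite absv_distrC // -Pt; apply: le_lt_trans (HP t t1) half1.
exact/filled_inB01/filledK_iter/hseg.
Qed.

Lemma ball_common_itinerary (D : set K) : cp_ball absv D -> D `<=` filled ->
  exists th, forall z, D z -> itinerary_of absv f z th.
Proof.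
move=> ballD Dfilled; have [c Dc seg] := cp_ball_segment Hv ballD.
exists (fun n => absv (iter n f c - 1) < 1) => z Dz n.
have close : absv (iter n f z - iter n f c) < 1.
  by rewrite (absv_distrC Hv); apply: iter_segment_close => t t1; exact/Dfilled/seg.
case: ifP => c1; first by rewrite (ultra_ball_recenter Hv _ close).
have [c0|] := filled_inB01 (filledK_iter n (Dfilled c Dc)); last by rewrite c1.
by rewrite -[iter n f z]subr0 (ultra_ball_recenter Hv _ close) subr0.
Qed.

(* Near the attracting cycle [z0, f z0, ...] the orbit of [z] is shadowed within
   distance [< 1] by the cycle, which forces [th] to become periodic. *)
Lemma not_preperiodic_not_attracted (D : set K) th :
  (forall z, D z -> itinerary_of absv f z th) -> ~ preperiodic th ->
  not_attracted absv f rhat D.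
Proof.
move=> Hit np [z0 [k [[k0 z0_filled _ _] [z [c [r [Dz _ zc basin_c]]]]]]].
have [z_filled z_cvg] := basin_c z zc.
have L0 : 0 < L by apply: lt_le_trans L_ge1.
have Lk0 : 0 < (L ^+ k)^-1 by rewrite invr_gt0 exprn_gt0.
have [N HN] := z_cvg _ Lk0.
have shadow q j : (N <= q)%N -> (j < k)%N ->
    th (q * k + j)%N = (absv (iter j f z0 - 1) < 1).
  move=> Nq jk; rewrite (itinerary_ofE Hv _ (Hit z Dz)) addnC iterD.
  apply: ultra_ball_recenter => //.
  move/le_lt_trans: (iter_filled_lipschitz j (filledK_iter (q * k) z_filled) z0_filled); apply.
  rewrite -(mulfV (lt0r_neq0 (exprn_gt0 k L0))).
  apply: le_lt_trans (ler_wpM2r (absv_ge0 Hv _) (ler_weXn2l L_ge1 (ltnW jk))) _.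
  by rewrite ltr_pM2l ?exprn_gt0 //; exact: HN.
apply: np; exists (N * k)%N, k; split => // n Nkn.
have Nq : (N <= n %/ k)%N by rewrite leq_divRL.
by rewrite (divn_eq n k) addnAC -mulSnr !shadow ?ltn_mod // ltnW.
Qed.

End SegmentDynamics.

Section PerturbedFamily.
Variables (R : realType) (K : fieldType) (absv : K -> R).
Variables (p : nat) (rhat c : R) (a : nat -> K) (Qf : K -> K) (lam h : K).
Hypothesis Hv : ultrametric_absv absv.
Hypothesis p_gt1 : (1 < p)%N.
Hypothesis absv_p : absv p%:R = p%:R^-1.
Hypothesis rhat_gt1 : 1 < rhat.
Hypothesis Qf_series : is_series_fun absv rhat a Qf.
Hypothesis coef_bound : forall i, absv (a i) * rhat ^+ i <= c.
Hypothesis c_lt1 : c < 1.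
Hypothesis lam_near1 : absv (lam - 1) < 1.
Hypothesis h_near1 : absv (h - 1) < 1.

Local Notation f := (Qlam p Qf lam h).

Let rhat_gt0 : 0 < rhat. Proof. exact: lt_trans ltr01 rhat_gt1. Qed.
Let p_gt1R : (1 : R) < p%:R. Proof. by rewrite ltr1n. Qed.
Let p_gt0R : (0 : R) < p%:R. Proof. exact: lt_trans ltr01 p_gt1R. Qed.

Lemma coef_bound_ge0 : 0 <= c.
Proof. by apply: le_trans (coef_bound 0); rewrite expr0 mulr1 absv_ge0. Qed.

Lemma series_tail_le u N : absv u <= rhat ->
  absv (Qf u - ps_sum a u N) <= c * (absv u / rhat) ^+ N.
Proof.
move=> hu; apply: (cvgK_absv_le Hv (N := N) (Qf_series hu)) => m Nm.
rewrite /ps_sum -!(big_mkord xpredT (fun i => a i * u ^+ i)).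
rewrite (big_cat_nat (leq0n N) Nm) /= addrAC subrr add0r big_seq.
have q0 : 0 <= absv u / rhat by rewrite divr_ge0 ?(absv_ge0 Hv) ?ltW.
have q1 : absv u / rhat <= 1 by rewrite ler_pdivrMr ?mul1r.
apply: (absv_sum_le Hv) => [|i]; first by rewrite mulr_ge0 ?coef_bound_ge0 ?exprn_ge0.
rewrite mem_index_iota => /andP[Ni _]; rewrite (absvM Hv) (absvX Hv).
rewrite (_ : _ * _ = (absv (a i) * rhat ^+ i) * (absv u / rhat) ^+ i); last first.
  by rewrite exprMn exprVn mulrACA divff ?mulr1 // expf_neq0 // lt0r_neq0.
apply: ler_pM; rewrite ?mulr_ge0 ?(absv_ge0 Hv) ?exprn_ge0 ?(ltW rhat_gt0) //.
by rewrite -(subnK Ni) exprD ler_piMl ?exprn_ge0 ?exprn_ile1.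
Qed.

Lemma Qf_le u : absv u <= rhat -> absv (Qf u) <= c.
Proof. by move/(series_tail_le 0); rewrite expr0 mulr1 /ps_sum big_ord0 subr0. Qed.

Lemma absv_lam_divp : absv (lam / p%:R) = p%:R.
Proof.
have lam1 : absv lam = 1 by rewrite -(subrK 1 lam) (absvD_eqr Hv) (absv1 Hv).
by rewrite (absvM Hv) (absvV Hv) absv_p invrK lam1 mul1r.
Qed.

Lemma absv_1_sub_lam_divp : absv (1 - lam / p%:R) = p%:R.
Proof. by rewrite (absvD_eqr Hv) (absvN Hv) absv_lam_divp // (absv1 Hv). Qed.

Lemma Pl_absv_ge u : 1 <= absv u -> 1 <= absv (u - 1) -> p%:R * absv u <= absv (Pl p lam u).
Proof.
move=> u1 u_1; have [u_gt1|u_le1] := ltrP 1 (absv u).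
  have up : 1 <= absv u ^+ p by rewrite exprn_ege1.
  have up0 : 0 < absv u ^+ p by apply: lt_le_trans up.
  have A1 : absv (lam / p%:R * u ^+ p) = p%:R * absv u ^+ p.
    by rewrite (absvM Hv) absv_lam_divp (absvX Hv).
  have A2 : absv ((1 - lam / p%:R) * u ^+ p.+1) = p%:R * absv u ^+ p.+1.
    by rewrite (absvM Hv) absv_1_sub_lam_divp (absvX Hv).
  have -> : absv (Pl p lam u) = p%:R * absv u ^+ p.+1.
    by rewrite /Pl (absvD_eqr Hv) A2 // A1 ltr_pM2l // exprS ltr_pMl.
  by rewrite ler_pM2l // exprS ler_peMr // ltW // (lt_trans ltr01).
have u_eq1 : absv u = 1 by apply/eqP; rewrite eq_le u_le1.
have u_1_eq1 : absv (1 - u) = 1.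
  by apply/eqP; rewrite eq_le (absv_distrC Hv) u_1 (absvB_le Hv) ?u_eq1 ?(absv1 Hv).
have dom : absv (lam / p%:R * (1 - u)) = p%:R by rewrite (absvM Hv) absv_lam_divp u_1_eq1 mulr1.
rewrite (_ : Pl p lam u = u ^+ p * (u + lam / p%:R * (1 - u))); last by rewrite /Pl exprS; ring.
rewrite (absvM Hv) (absvX Hv) u_eq1 expr1n mul1r mulr1.
by rewrite (absvD_eqr Hv) ?dom ?u_eq1.
Qed.

Lemma Qlam_absv_ge x : absv x <= rhat -> ~ inB01 absv x -> p%:R * absv x <= absv (f x).
Proof.
move=> x_rhat x_out; have x1 : 1 <= absv x by rewrite leNgt; apply/negP => x1; apply: x_out; left.
have x_1 : 1 <= absv (x - 1) by rewrite leNgt; apply/negP => x_1; apply: x_out; right.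
have ux : absv (x + h - 1) = absv x.
  by rewrite -addrA addrC (absvD_eqr Hv) // (lt_le_trans h_near1).
have ux_1 : absv (x + h - 1 - 1) = absv (x - 1).
  rewrite (_ : x + h - 1 - 1 = (h - 1) + (x - 1)); last by ring.
  by rewrite (absvD_eqr Hv) // (lt_le_trans h_near1).
have Pu : p%:R * absv x <= absv (Pl p lam (x + h - 1)).
  by rewrite -ux; apply: Pl_absv_ge; rewrite ?ux ?ux_1.
have rest : absv (Qf (x + h - 1) + (1 - h)) < 1.
  apply: (absvD_lt Hv); last by rewrite (absv_distrC Hv).
  by apply: le_lt_trans c_lt1; apply: Qf_le; rewrite ux.
have Pu_gt1 : 1 < absv (Pl p lam (x + h - 1)).
  by apply: lt_le_trans Pu; apply: lt_le_trans p_gt1R _; rewrite ler_peMr // ltW.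
rewrite (_ : f x = Qf (x + h - 1) + (1 - h) + Pl p lam (x + h - 1)); last by rewrite /Qlam; ring.
by rewrite (absvD_eqr Hv) ?(lt_trans rest) // -ux.
Qed.

(* An orbit starting outside [B_0] and [B_1] grows at least like [p ^ n]. *)
Lemma Qlam_filled_inB01 z : filledK absv f rhat z -> inB01 absv z.
Proof.
move=> z_filled; case: (pselect (inB01 absv z)) => // z_out; exfalso.
have grow n : ~ inB01 absv (iter n f z) /\ p%:R ^+ n <= absv (iter n f z).
  elim: n => [|n [out_n grow_n]].
    by rewrite expr0 leNgt; split=> //; apply/negP => z1; apply: z_out; left.
  have fz := Qlam_absv_ge (z_filled n) out_n.
  have pn : p%:R ^+ n.+1 <= absv (iter n.+1 f z).
    by apply: le_trans fz; rewrite exprS ler_pM2l.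
  split=> //; apply: (absv_gt1_notinB01 Hv); apply: lt_le_trans pn.
  by rewrite exprn_egt1.
pose n := Num.Def.archi_bound rhat.
have two_p : (2 : R) ^+ n <= p%:R ^+ n by rewrite lerXn2r ?nnegrE ?ler0n // ler_nat.
move: (upper_nthrootP (leqnn n)).
by rewrite ltNge (le_trans two_p (le_trans (grow n).2 (z_filled n))).
Qed.

Definition Qstar_trunc (N : nat) : {poly K} :=
  (lam / p%:R) *: 'X^p + (1 - lam / p%:R) *: 'X^(p.+1) + \poly_(i < N) a i.

Definition Qlam_trunc (N : nat) : {poly K} :=
  Qstar_trunc N \Po ('X + (h - 1)%:P) + (1 - h)%:P.

Lemma horner_Qlam_trunc N z :
  (Qlam_trunc N).[z] = (Qstar_trunc N).[z + h - 1] + (1 - h).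
Proof.
rewrite /Qlam_trunc hornerD hornerC horner_comp.
by congr (_.[_] + _); rewrite hornerD hornerX hornerC addrA.
Qed.

Lemma horner_Qstar_trunc N u : (Qstar_trunc N).[u] = Pl p lam u + ps_sum a u N.
Proof. by rewrite /Qstar_trunc !hornerD !hornerZ !hornerXn horner_poly. Qed.

Lemma Qstar_trunc_coef_le N i : absv (Qstar_trunc N)`_i <= p%:R.
Proof.
rewrite !coefD !coefZ !coefXn coef_poly.
have natb_le1 (b : bool) : absv (b%:R : K) <= 1.
  by case: b; rewrite ?mulr1n ?mulr0n ?(absv0 Hv) ?(absv1 Hv).
apply: (absvD_le Hv); first apply: (absvD_le Hv).
- by rewrite (absvM Hv) absv_lam_divp ler_piMr ?natb_le1 // ltW.
- by rewrite (absvM Hv) absv_1_sub_lam_divp ler_piMr ?natb_le1 // ltW.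
case: ifP => _; last by rewrite (absv0 Hv) ltW.
apply: le_trans (ltW (lt_trans c_lt1 p_gt1R)).
by apply: le_trans (coef_bound i); rewrite ler_peMr ?(absv_ge0 Hv) // exprn_ege1 // ltW.
Qed.

Lemma Qlam_trunc_err N z : absv z <= 1 ->
  absv (f z - (Qlam_trunc N).[z]) <= c * rhat^-1 ^+ N.
Proof.
move=> z1; have u1 : absv (z + h - 1) <= 1.
  by rewrite -addrA; apply: (absvD_le Hv) z1 _; exact: ltW.
rewrite horner_Qlam_trunc horner_Qstar_trunc.
rewrite (_ : f z - _ = Qf (z + h - 1) - ps_sum a (z + h - 1) N); last by rewrite /Qlam; ring.
apply: le_trans (series_tail_le N (le_trans u1 (ltW rhat_gt1))) _.
have q0 : 0 <= absv (z + h - 1) / rhat by rewrite divr_ge0 ?(absv_ge0 Hv) ?(ltW rhat_gt0).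
rewrite ler_wpM2l ?coef_bound_ge0 // lerXn2r ?nnegrE ?invr_ge0 ?(ltW rhat_gt0) //.
by rewrite ler_pdivrMr // mulVf ?gt_eqF.
Qed.

Lemma Qlam_trunc_lipschitz N z w : absv z <= 1 -> absv w <= 1 ->
  absv ((Qlam_trunc N).[z] - (Qlam_trunc N).[w]) <= p%:R * absv (z - w).
Proof.
move=> z1 w1; have shift1 v : absv v <= 1 -> absv (v + h - 1) <= 1.
  by move=> v1; rewrite -addrA; apply: (absvD_le Hv) v1 _; exact: ltW.
rewrite !horner_Qlam_trunc opprD addrACA subrr addr0.
rewrite (_ : z - w = (z + h - 1) - (w + h - 1)); last by ring.
by apply: poly_lipschitz; rewrite ?shift1 // => i; exact: Qstar_trunc_coef_le.
Qed.

Lemma Qlam_poly_approx (e : R) : 0 < e -> exists F : {poly K},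
  (forall z, absv z <= 1 -> absv (f z - F.[z]) <= e) /\
  (forall z w, absv z <= 1 -> absv w <= 1 -> absv (F.[z] - F.[w]) <= p%:R * absv (z - w)).
Proof.
move=> e0; have [N HN] := exists_geometric_le c rhat_gt1 e0.
exists (Qlam_trunc N); split; last exact: Qlam_trunc_lipschitz.
by move=> z z1; apply: le_trans (Qlam_trunc_err N z1) HN.
Qed.

End PerturbedFamily.

Lemma rho_le1 (R : realType) (p : nat) : (1 <= p)%N -> rho R p <= 1.
Proof.
move=> p1; have p1R : (1 : R) <= p%:R by rewrite ler1n.
have e0 : - (p%:R - 1)^-1 <= (0 : R) by rewrite oppr_le0 invr_ge0 subr_ge0.
by apply: le_trans (ler_powR p1R e0) _; rewrite powRr0.
Qed.

Theorem lemma3p8 (R : realType) (K : closedFieldType) (absv : K -> R) (p : nat)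
  (rhat : R) (a : nat -> K) (Qf : K -> K) (lam h : K) (D : set K) :
  is_Cp absv p ->
  (exists x : K, x != 0 /\ absv x = rhat) -> 1 < rhat ->
  is_series_fun absv rhat a Qf ->
  (exists c : R, c < rho R p /\ forall i, absv (a i) * rhat ^+ i <= c) ->
  absv (lam - 1) < 1 ->
  Pl p lam h + Qf h = h ->
  absv (h - 1) <= absv (Qf 1) / p%:R ->
  cp_ball absv D ->
  D `<=` filledK absv (Qlam p Qf lam h) rhat ->
  (exists th : nat -> bool, forall z, D z -> itinerary_of absv (Qlam p Qf lam h) z th) /\
  (forall th : nat -> bool,
     (forall z, D z -> itinerary_of absv (Qlam p Qf lam h) z th) ->
     ~ preperiodic th ->
     wandering (Qlam p Qf lam h) D /\ not_attracted absv (Qlam p Qf lam h) rhat D).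
Proof.
move=> [[p_prime ? ? ? ?] [absv_p _ _]] _ rhat_gt1 Qf_series [c [c_rho coef_bound]].
move=> lam_near1 _ h_close ballD Dfilled.
have Hv : ultrametric_absv absv by split.
have p_gt1 := prime_gt1 p_prime.
have c_lt1 : c < 1 := lt_le_trans c_rho (rho_le1 R (ltnW p_gt1)).
have p_ge1 : (1 : R) <= p%:R by rewrite ler1n ltnW.
have h_near1 : absv (h - 1) < 1.
  apply: le_lt_trans h_close _; rewrite ltr_pdivrMr ?(lt_le_trans ltr01) // mul1r.
  apply: le_lt_trans (Qf_le Hv rhat_gt1 Qf_series coef_bound _) (lt_le_trans c_lt1 p_ge1).
  by rewrite (absv1 Hv) ltW.
have filled := Qlam_filled_inB01 Hv p_gt1 absv_p rhat_gt1 Qf_series coef_bound c_lt1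
  lam_near1 h_near1.
have approx := Qlam_poly_approx Hv p_gt1 absv_p rhat_gt1 Qf_series coef_bound c_lt1
  lam_near1 h_near1.
split; first exact: (ball_common_itinerary Hv filled p_ge1 approx ballD Dfilled).
move=> th Hit aper; split; first exact: (not_preperiodic_wandering Hv Hit aper).
exact: (not_preperiodic_not_attracted Hv filled p_ge1 approx Hit aper).
Qed.
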